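(* For every concurrent game structure $G$, every $F\subseteq S$ and every $\varepsilon>0$, there exist $k>0$ and a $k$-uniform player-1 selector $\xi$ such that the memoryless strategy $\overline{\xi}$ is $\varepsilon$-optimal for $\mathrm{Safe}(F)$, i.e. $\inf_{\pi_2}\Pr_s^{\overline{\xi},\pi_2}(\mathrm{Safe}(F))\ge\mathrm{val}_1(\mathrm{Safe}(F))(s)-\varepsilon$ for all $s\in S$.
   Context: Concurrent game structure $G=(S,M,\Gamma_1,\Gamma_2,\delta)$: finite states $S$, finite moves $M$, nonempty move sets $\Gamma_i(s)\subseteq M$, $\delta(s,a_1,a_2)\in\mathrm{Distr}(S)$ (simultaneous independent moves). A selector for player 1 assigns to each state $s$ a distribution on $\Gamma_1(s)$; $\overline{\xi}$ is the memoryless strategy playing $\xi$ forever. Strategies map histories to distributions on available moves; $\Pr_s^{\pi_1,\pi_2}$ is the induced measure on plays from $s$. $\mathrm{Safe}(F)$: plays staying in $F$ forever; $\mathrm{val}_1(\mathrm{Safe}(F))(s)=\sup_{\pi_1}\inf_{\pi_2}\Pr_s^{\pi_1,\pi_2}(\mathrm{Safe}(F))$. Let $T=S\setminus F$ and $W_1=\{s:\mathrm{val}_1(\mathrm{Safe}(F))(s)=1\}$. A selector $\xi$ is $k$-uniform if for all $s\in S\setminus(T\cup W_1)$ and all moves $a$ in the support of $\xi(s)$ there are integers $0\le i\le j\le k$ with $\xi(s)(a)=i/j$. *)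

From HB Require Import structures.
From mathcomp Require Import all_boot all_order all_algebra.
From mathcomp Require Import classical_sets reals.
Set Implicit Arguments. Unset Strict Implicit. Unset Printing Implicit Defensive.
Import Order.TTheory GRing.Theory Num.Theory.
Local Open Scope ring_scope.


Section Games.
Variable R : realType.

Definition is_distr (T : finType) (A : {set T}) (p : T -> R) : Prop :=
  (forall t, 0 <= p t) /\ (forall t, t \notin A -> p t = 0) /\ \sum_(t : T) p t = 1.

Record cgs (S M : finType) := CGS {
  Gam1 : S -> {set M};
  Gam2 : S -> {set M};
  delta : S -> M -> M -> S -> R;
  Gam1_nonempty : forall s, Gam1 s != finset.set0;
  Gam2_nonempty : forall s, Gam2 s != finset.set0;
  delta_distr : forall s a1 a2, a1 \in Gam1 s -> a2 \in Gam2 s ->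
                  is_distr (finset.setTfor S) (delta s a1 a2)
}.

Variables (S M : finType) (G : cgs S M).

(* Histories are nonempty sequences of states, encoded as x :: xs;
   the current state is last x xs. A strategy maps histories to move
   distributions; only its values on nonempty histories matter. *)
Definition strategy1 (pi : seq S -> M -> R) : Prop :=
  forall x xs, is_distr (Gam1 G (last x xs)) (pi (x :: xs)).
Definition strategy2 (pi : seq S -> M -> R) : Prop :=
  forall x xs, is_distr (Gam2 G (last x xs)) (pi (x :: xs)).

Definition selector1 (xi : S -> M -> R) : Prop :=
  forall s, is_distr (Gam1 G s) (xi s).

Definition memoryless (xi : S -> M -> R) : seq S -> M -> R :=
  fun h => match h with [::] => fun _ => 0 | x :: xs => xi (last x xs) end.

(* Probability, from history x :: xs, that the current state and the next
   n states all lie in F. *)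
Fixpoint safeP (F : {set S}) (pi1 pi2 : seq S -> M -> R) (n : nat)
    (x : S) (xs : seq S) : R :=
  let c := last x xs in
  if c \in F then
    match n with
    | 0 => 1
    | n'.+1 => \sum_(a1 : M) \sum_(a2 : M) \sum_(t : S)
               pi1 (x :: xs) a1 * pi2 (x :: xs) a2 * delta G c a1 a2 t
               * safeP F pi1 pi2 n' x (rcons xs t)
    end
  else 0.

(* Pr_s^{pi1,pi2}(Safe(F)): by continuity from above of the play measure,
   the limit (= infimum, the sequence being nonincreasing) of the
   probabilities of staying in F for the first n steps. *)
Definition prob_safe (F : {set S}) (pi1 pi2 : seq S -> M -> R) (s : S) : R :=
  inf (range (fun n => safeP F pi1 pi2 n s [::])).

Definition val1_safe (F : {set S}) (s : S) : R :=
  sup [set v | exists2 pi1, strategy1 pi1 &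
         v = inf [set p | exists2 pi2, strategy2 pi2 & p = prob_safe F pi1 pi2 s]].

(* k-uniform selector: on S \ (T u W1), where T = S \ F and
   W1 = {s | val1_safe F s = 1}, all positive probabilities are i/j,
   0 <= i <= j <= k. *)
Definition k_uniform (F : {set S}) (k : nat) (xi : S -> M -> R) : Prop :=
  forall s, s \in F -> val1_safe F s != 1 ->
    forall a, 0 < xi s a ->
      exists i j : nat, (i <= j <= k)%N /\ xi s a = i%:R / j%:R.

End Games.

From HB Require Import structures.
From mathcomp Require Import all_boot all_order all_algebra.
From mathcomp Require Import classical_sets reals.
From mathcomp Require Import ring lra.
From mathcomp Require Import boolp functions topology normedtype function_spaces.
Import numFieldNormedType.Exports.
Import Order.TTheory GRing.Theory Num.Theory.
Local Open Scope ring_scope.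
Set Implicit Arguments. Unset Strict Implicit. Unset Printing Implicit Defensive.

(* Let v be the limit of the value iteration W_(n+1)(s) = sup_p min_a2 E[W_n]
   (on F); v bounds val_1(Safe(F)) from above, since W_n is the value of the
   n-step game. By compactness of the move simplex every state has a move p_s
   with v(s) <= E_(p_s, a2)[v] for all replies a2. Round p_s to a distribution
   with denominator at most k. For u = v - e + e v^2 the rounded selector
   satisfies u(s) <= E_(xi_s, a2)[u]: when the values v of the successors are
   not all equal, the convexity of u gains e times their variance, which is
   bounded below uniformly and beats the rounding loss O(1/k); when they are
   equal, rounding does not change the expectation. Hence u is a lower bound
   for the probability of staying in F forever under xi-bar, and
   u >= v - e >= val_1 - e. *)

Section BoxCompactness.
Variables (R : realType) (T : finType).
Local Open Scope classical_set_scope.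

Let box := prod_topology (fun _ : T => (R : topologicalType)).

Lemma continuous_linear_form (w : T -> R) (s : seq T) :
  continuous (fun q : box => \sum_(a <- s) q a * w a : R).
Proof.
elim: s => [|a s IH].
  have -> : (fun q : box => \sum_(a <- [::]) q a * w a : R) = cst 0.
    by apply: funext => q; rewrite big_nil.
  exact: (@cst_continuous box R).
have -> : (fun q : box => \sum_(b <- a :: s) q b * w b : R) =
   (fun q : box => (q a * w a : R) + \sum_(b <- s) q b * w b).
  by apply: funext => q; rewrite big_cons.
move=> q.
have proj_a : (fun q0 : box => (q0 a : R)) @ q --> (q a : R).
  exact: (@proj_continuous T (fun _ => (R : topologicalType)) a).
have term_a : (fun q0 : box => (q0 a * w a : R)) @ q --> (q a * w a : R).
  exact: (@cvgM R box (nbhs q) _ (fun q0 : box => q0 a) (fun=> w a) (q a) (w a)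
            proj_a (cvg_cst _)).
exact: (@cvgD R R box (nbhs q) _ _ _ _ _ term_a (IH q)).
Qed.

Lemma box_approx_feasible (J : Type) (w : J -> T -> R) (c : J -> R) :
  (forall g, 0 < g -> exists p : T -> R, (forall a, 0 <= p a <= 1) /\
      forall j, c j - g <= \sum_a p a * w j a) ->
  exists p : T -> R, (forall a, 0 <= p a <= 1) /\
      forall j, c j <= \sum_a p a * w j a.
Proof.
move=> approx.
pose K := [set f : box | forall i, (`[(0:R), 1]%classic) (f i)].
have cK : compact K.
  exact: (@tychonoff T (fun _ => (R : topologicalType)) (fun _ => `[(0:R), 1]%classic)
            (fun _ => @segment_compact R 0 1)).
pose L j (f : box) := \sum_a f a * w j a.
pose B g := [set f : box | K f /\ forall j, c j - g <= L j f].
(* The sets of g-approximate solutions form a proper filter base on the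
   compact box; a cluster point is an exact solution. *)
pose Fl := filter_from [set g : R | 0 < g] B.
have FlF : Filter Fl.
  apply: filter_from_filter; first by exists 1; rewrite /= ltr01.
  move=> g1 g2 g10 g20; exists (Order.min g1 g2); first by rewrite /= lt_min g10.
  move=> f [Kf fc]; split; split => // j; apply: le_trans (fc j);
    by rewrite lerD2l lerN2 ge_min lexx ?orbT.
have FlP : ProperFilter Fl.
  apply: (filter_from_proper FlF) => g g0.
  by have [p [p01 pc]] := approx g g0; exists p.
have FlK : Fl K by exists 1; [rewrite /= ltr01 | move=> f []].
have [p [Kp clp]] := cK Fl FlP FlK.
exists p; split => [a|j]; first by have := Kp a; rewrite /= in_itv.
rewrite leNgt; apply/negP => lt_pj.
pose g := (c j - L j p) / 2.
have g0 : 0 < g by rewrite divr_gt0 // subr_gt0.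
have near_p : nbhs p (L j @^-1` [set y | y < c j - g]).
  apply: (@continuous_linear_form (w j) (index_enum T) p).
  apply: open_nbhs_nbhs; split; first exact: open_lt.
  by rewrite /= /g; move: lt_pj; rewrite -/(L j p) => lt_pj; lra.
have [q [[_ qc] qlt]] := clp _ _ (ex_intro2 _ _ g g0 (fun _ h => h) : Fl (B g)) near_p.
by have := qc j; rewrite leNgt qlt.
Qed.

End BoxCompactness.

Section FiniteDistributions.
Variables (R : realType) (T : finType).
Implicit Types (A : {set T}) (p q f : T -> R).

Lemma distr_ge0 A p t : is_distr A p -> 0 <= p t.
Proof. by case=> + _; apply. Qed.

Lemma distr_out A p t : is_distr A p -> t \notin A -> p t = 0.
Proof. by case=> _ [+ _]; apply. Qed.

Lemma distr_sum A p : is_distr A p -> \sum_t p t = 1.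
Proof. by case=> _ []. Qed.

Lemma distr_le1 A p t : is_distr A p -> p t <= 1.
Proof.
move=> D; rewrite -(distr_sum D) (bigD1 t) //= lerDl.
by apply: sumr_ge0 => i _; apply: distr_ge0 D.
Qed.

Lemma distr_pos A p : is_distr A p -> exists t, 0 < p t.
Proof.
move=> D; apply/not_existsP => nopos.
have : \sum_t p t <= 0.
  by apply: sumr_le0 => t _; rewrite leNgt; apply/negP; apply: nopos.
by rewrite (distr_sum D) ler10.
Qed.

Lemma dirac_distr A a : a \in A -> is_distr A (fun b => (b == a)%:R : R).
Proof.
move=> aA; split=> [b|]; first exact: ler0n.
split=> [b bA|]; first by case: eqP bA => // ->; rewrite aA.
by rewrite (bigD1 a) //= eqxx big1 ?addr0 // => b /negbTE ->.
Qed.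

Lemma exists_distr A : A != finset.set0 -> exists p, is_distr A p.
Proof. by case/set0Pn=> a aA; exists (fun b => (b == a)%:R : R); apply: dirac_distr. Qed.

Lemma distr_avg_le A p f b :
  is_distr A p -> (forall t, t \in A -> f t <= b) -> \sum_t p t * f t <= b.
Proof.
move=> D fb; rewrite -[b]mul1r -(distr_sum D) mulr_suml.
apply: ler_sum => t _; case: (boolP (t \in A)) => tA.
  by apply: ler_wpM2l; [apply: distr_ge0 D | apply: fb].
by rewrite (distr_out D tA) !mul0r.
Qed.

Lemma distr_avg_ge A p f b :
  is_distr A p -> (forall t, t \in A -> b <= f t) -> b <= \sum_t p t * f t.
Proof.
move=> D bf; rewrite -[b]mul1r -(distr_sum D) mulr_suml.
apply: ler_sum => t _; case: (boolP (t \in A)) => tA.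
  by apply: ler_wpM2l; [apply: distr_ge0 D | apply: bf].
by rewrite (distr_out D tA) !mul0r.
Qed.

Lemma distr_approx_feasible (A : {set T}) (J : Type) (w : J -> T -> R) (c : J -> R) :
  (forall g, 0 < g ->
     exists2 p, is_distr A p & forall j, c j - g <= \sum_a p a * w j a) ->
  exists2 p, is_distr A p & forall j, c j <= \sum_a p a * w j a.
Proof.
move=> approx.
(* Add to the system the constraints sum p >= 1, - sum p >= -1 and
   - p a >= - [a \in A], which cut the distributions on A out of the box. *)
pose w' (j : (bool + T) + J) : T -> R := match j with
  | inl (inl b) => fun _ => (-1) ^+ ~~ b
  | inl (inr a) => fun t => - (t == a)%:R
  | inr j => w j end.
pose c' (j : (bool + T) + J) : R := match j with
  | inl (inl b) => (-1) ^+ ~~ b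
  | inl (inr a) => - (a \in A)%:R
  | inr j => c j end.
have sum_cst (p : T -> R) (k : R) : \sum_t p t * k = (\sum_t p t) * k by rewrite mulr_suml.
have sum_dirac (p : T -> R) a : \sum_t p t * - (t == a)%:R = - p a.
  rewrite (bigD1 a) //= eqxx mulrN1 big1 ?addr0 // => t /negbTE ->.
  by rewrite mulrN mulr0 oppr0.
case: (@box_approx_feasible R T _ w' c') => [g g0|p [p01 pc]].
  have [p D pc] := approx g g0.
  exists p; split=> [a|[[b|a]|j] /=]; first by rewrite (distr_ge0 a D) (distr_le1 a D).
  - by rewrite sum_cst (distr_sum D) mul1r gerBl ltW.
  - rewrite sum_dirac; case: (boolP (a \in A)) => aA /=.
      by have := distr_le1 a D; lra.
    by rewrite (distr_out D aA) oppr0 sub0r lerNl oppr0 ltW.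
  - exact: pc.
have D : is_distr A p.
  split=> [a|]; first by case/andP: (p01 a).
  split=> [a aA|].
    have := pc (inl (inr a)); rewrite /= sum_dirac (negbTE aA) oppr0 lerNr oppr0.
    by case/andP: (p01 a) => p0 _; lra.
  have := pc (inl (inl true)); have := pc (inl (inl false)).
  by rewrite /= !sum_cst !mulr1 mulrN1; lra.
by exists p => // j; apply: pc (inr j).
Qed.

Lemma finite_pos_lower_bound (P : pred T) f :
  (forall t, P t -> 0 < f t) -> exists2 c, 0 < c & forall t, P t -> c <= f t.
Proof.
move=> fP; pose D := 1 + \sum_(t | P t) (f t)^-1.
have inv_ge0 t : P t -> 0 <= (f t)^-1 by move=> Pt; rewrite invr_ge0 ltW // fP.
have D0 : 0 < D.
  by have : 0 <= \sum_(t | P t) (f t)^-1 := sumr_ge0 _ inv_ge0; rewrite /D; lra.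
exists D^-1; first by rewrite invr_gt0.
move=> t Pt; have ft0 := fP t Pt.
have : (f t)^-1 <= D.
  rewrite /D (bigD1 t) //=.
  have : 0 <= \sum_(u | P u && (u != t)) (f u)^-1 by apply: sumr_ge0 => u /andP[/inv_ge0].
  lra.
by move=> le_inv; rewrite -(invrK (f t)) lef_pV2 ?posrE ?invr_gt0.
Qed.

Lemma sum_weighted_diff_le (p q w : T -> R) c :
  0 <= c -> (forall t, p t - q t <= c) -> (forall t, p t != q t -> 0 <= w t <= 1) ->
  \sum_t (p t - q t) * w t <= #|T|%:R * c.
Proof.
move=> c0 pqc w01.
apply: le_trans (_ : _ <= \sum_(t : T) c) _; last by rewrite sumr_const mulr_natl.
apply: ler_sum => t _.
have [->|/w01/andP[w0 w1]] := eqVneq (p t) (q t); first by rewrite subrr mul0r.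
have [d0|d0] := lerP (p t - q t) 0; first by apply: le_trans c0; rewrite mulr_le0_ge0.
by apply: le_trans (pqc t); rewrite ler_piMr // ltW.
Qed.

End FiniteDistributions.

Section Rounding.
Variables (R : realType) (T : finType) (A : {set T}) (p : T -> R) (K : nat).
Hypothesis p_distr : is_distr A p.

Definition round_count t : nat := Num.truncn (K%:R * p t).
Definition round_total : nat := \sum_t round_count t.
Definition round_distr t : R := (round_count t)%:R / round_total%:R.

Lemma round_count_le t : (round_count t)%:R <= K%:R * p t.
Proof. by rewrite truncn_le mulr_ge0 // (distr_ge0 t p_distr). Qed.

Lemma round_count_gt t : K%:R * p t - 1 < (round_count t)%:R.
Proof. by have := truncnS_gt (K%:R * p t); rewrite -addn1 natrD; lra. Qed.

Lemma round_total_le : (round_total <= K)%N.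
Proof.
rewrite -(ler_nat R) natr_sum; apply: le_trans (ler_sum _ (fun t _ => round_count_le t)) _.
by rewrite -mulr_sumr (distr_sum p_distr) mulr1.
Qed.

Lemma round_distr_eq0 t : p t = 0 -> round_distr t = 0.
Proof. by rewrite /round_distr /round_count => ->; rewrite mulr0 truncn0 mul0r. Qed.

Lemma round_distr_frac t :
  exists i j : nat, (i <= j <= K)%N /\ round_distr t = i%:R / j%:R.
Proof.
exists (round_count t), round_total; split => //.
by rewrite round_total_le andbT /round_total (bigD1 t) //= leq_addr.
Qed.

Variable pmin : R.
Hypothesis pmin_le : forall t, 0 < p t -> pmin <= p t.
Hypothesis K_large : 2 <= K%:R * pmin.

Let K_gt0 : 0 < K%:R :> R.
Proof. by rewrite ltr0n lt0n; apply/eqP => K0; move: K_large; rewrite K0 mul0r; lra. Qed.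

Lemma round_total_gt0 : (0 < round_total)%N.
Proof.
have [t pt] := distr_pos p_distr.
have : 1 < (round_count t)%:R :> R.
  have := le_trans K_large (ler_wpM2l (ler0n _ _) (pmin_le pt)).
  have := round_count_gt t; lra.
by rewrite ltr1n /round_total (bigD1 t) //= => /ltnW/leq_trans; apply; rewrite leq_addr.
Qed.

Lemma round_distr_is_distr : is_distr A round_distr.
Proof.
split=> [t|]; first by rewrite divr_ge0.
split=> [t tA|]; first by rewrite round_distr_eq0 // (distr_out p_distr tA).
by rewrite /round_distr -mulr_suml -natr_sum divff // pnatr_eq0 -lt0n round_total_gt0.
Qed.

Lemma round_distr_ge t : p t - K%:R^-1 <= round_distr t.
Proof.
have -> : p t - K%:R^-1 = (K%:R * p t - 1) / K%:R by field; apply: lt0r_neq0.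
apply: (@le_trans _ _ ((round_count t)%:R / K%:R)).
  by rewrite ler_pM2r ?invr_gt0 // ltW // round_count_gt.
apply: ler_wpM2l; first exact: ler0n.
by rewrite lef_pV2 ?posrE ?K_gt0 ?ltr0n ?round_total_gt0 // ler_nat round_total_le.
Qed.

Lemma round_distr_ge_half t : p t / 2 <= round_distr t.
Proof.
have := distr_ge0 t p_distr; rewrite le_eqVlt => /orP[/eqP p0|pt].
  by rewrite -p0 round_distr_eq0 // mul0r.
have : K%:R^-1 <= pmin / 2.
  by rewrite -(ler_pM2l K_gt0) mulfV ?lt0r_neq0 //; have := K_large; lra.
have := pmin_le pt; have := round_distr_ge t; lra.
Qed.

End Rounding.

Section Variance.
Variables (R : realType) (T : finType).
Implicit Types (mu f : T -> R).

Lemma variance_eq mu f : \sum_t mu t = 1 ->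
  \sum_t mu t * (f t - \sum_u mu u * f u) ^+ 2 =
  \sum_t mu t * f t ^+ 2 - (\sum_t mu t * f t) ^+ 2.
Proof.
move=> mu1; set m := \sum_u mu u * f u.
have expand t : mu t * (f t - m) ^+ 2 =
    mu t * f t ^+ 2 + (- (2 * m) * (mu t * f t)) + m ^+ 2 * mu t by ring.
under eq_bigr do rewrite expand.
by rewrite !big_split /= -!mulr_sumr mu1 -/m; ring.
Qed.

Lemma variance_ge_spread mu f t1 t2 w d :
  (forall t, 0 <= mu t) -> \sum_t mu t = 1 -> t1 != t2 ->
  w <= mu t1 -> w <= mu t2 -> 0 <= w -> 0 <= d -> d <= `|f t1 - f t2| ->
  (\sum_t mu t * f t) ^+ 2 + w * d ^+ 2 / 2 <= \sum_t mu t * f t ^+ 2.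
Proof.
move=> mu0 mu1 t12 wt1 wt2 w0 d0 dle.
suff : w * d ^+ 2 / 2 <= \sum_t mu t * (f t - \sum_u mu u * f u) ^+ 2.
  by rewrite variance_eq //; lra.
have t21 : t2 != t1 by rewrite eq_sym.
set m := \sum_u mu u * f u.
rewrite (bigD1 t1) //= (bigD1 t2) //=; set rest := \sum_(t | _) _.
have rest0 : 0 <= rest by apply: sumr_ge0 => t _; rewrite mulr_ge0 ?sqr_ge0.
have d2 : d ^+ 2 <= (f t1 - f t2) ^+ 2.
  by rewrite -(real_normK (num_real (f t1 - f t2))) ler_pXn2r ?nnegrE // (le_trans d0).
have := sqr_ge0 (f t1 + f t2 - 2 * m).
have := sqr_ge0 (f t1 - m); have := sqr_ge0 (f t2 - m).
nra.
Qed.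

Lemma sum_const_on_support mu f c :
  \sum_t mu t = 1 -> (forall t, mu t != 0 -> f t = c) -> \sum_t mu t * f t = c.
Proof.
move=> mu1 fc; rewrite -[c]mul1r -mu1 mulr_suml; apply: eq_bigr => t _.
by have [->|/fc ->] := eqVneq (mu t) 0; rewrite ?mul0r.
Qed.

End Variance.

(* The one-step inequality behind the certificate v - e + e v^2, with m and q
   the first two moments of the successor values under the rounded move and
   ms their mean under the optimal one: a variance V pays, through the convex
   term, for a loss of expectation of at most e V / 3. *)
Lemma convex_gain (R : realType) (e vs m ms q V : R) :
  0 < e -> e <= 1 -> 0 <= vs -> 0 <= m <= 1 -> vs <= ms -> ms <= 1 ->
  0 <= V -> m ^+ 2 + V <= q -> 3 * (ms - m) <= e * V ->
  vs - e + e * vs ^+ 2 <= m - e + e * q.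
Proof.
move=> e0 e1 vs0 /andP[m0 m1] vsms ms1 V0 mq loss.
have [vsm|mvs] := lerP vs m.
  have : vs ^+ 2 <= m ^+ 2 by rewrite ler_pXn2r ?nnegrE.
  nra.
have : e * (vs ^+ 2 - m ^+ 2) <= 2 * (vs - m).
  have -> : e * (vs ^+ 2 - m ^+ 2) = (vs - m) * (e * (vs + m)) by ring.
  rewrite mulrC ler_wpM2r ?subr_ge0 ?ltW //.
  have : vs + m <= 2 by lra.
  nra.
nra.
Qed.

Section OneStep.
Variables (R : realType) (S M : finType) (G : cgs R S M).
Implicit Types (c : S) (p q : M -> R) (u : S -> R).

Definition step_distr c p a2 t : R := \sum_a1 p a1 * delta G c a1 a2 t.

Definition step_exp c p a2 u : R := \sum_t step_distr c p a2 t * u t.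

Lemma exists_move2 c : exists a2, a2 \in Gam2 G c.
Proof. exact/set0Pn/Gam2_nonempty. Qed.

Lemma step_weight_ge0 c p a1 a2 t :
  is_distr (Gam1 G c) p -> a2 \in Gam2 G c -> 0 <= p a1 * delta G c a1 a2 t.
Proof.
move=> D a2G; have [a1G|a1G] := boolP (a1 \in Gam1 G c); last first.
  by rewrite (distr_out D a1G) mul0r.
by rewrite mulr_ge0 ?(distr_ge0 _ D) ?(distr_ge0 _ (delta_distr a1G a2G)).
Qed.

Lemma step_distr_is_distr c p a2 : is_distr (Gam1 G c) p -> a2 \in Gam2 G c ->
  is_distr [set: S]%SET (step_distr c p a2).
Proof.
move=> D a2G; split=> [t|]; first by apply: sumr_ge0 => a1 _; apply: step_weight_ge0.
split=> [t|]; first by rewrite finset.in_setT.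
rewrite exchange_big /= -(distr_sum D); apply: eq_bigr => a1 _; rewrite -mulr_sumr.
have [a1G|a1G] := boolP (a1 \in Gam1 G c); last by rewrite (distr_out D a1G) !mul0r.
by rewrite (distr_sum (delta_distr a1G a2G)) mulr1.
Qed.

Lemma step_exp_sum c p a2 u :
  step_exp c p a2 u = \sum_a1 p a1 * \sum_t delta G c a1 a2 t * u t.
Proof.
rewrite /step_exp /step_distr; under eq_bigr do rewrite mulr_suml.
rewrite exchange_big /=; apply: eq_bigr => a1 _; rewrite mulr_sumr.
by apply: eq_bigr => t _; rewrite mulrA.
Qed.

Lemma step_exp_mono c p a2 u u' : is_distr (Gam1 G c) p -> a2 \in Gam2 G c ->
  (forall t, u t <= u' t) -> step_exp c p a2 u <= step_exp c p a2 u'.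
Proof.
move=> D a2G uu'; apply: ler_sum => t _; apply: ler_wpM2l => //.
exact: distr_ge0 (step_distr_is_distr D a2G).
Qed.

Lemma step_exp_addr c p a2 u b : is_distr (Gam1 G c) p -> a2 \in Gam2 G c ->
  step_exp c p a2 (fun t => u t + b) = step_exp c p a2 u + b.
Proof.
move=> D a2G; rewrite /step_exp; under eq_bigr do rewrite mulrDr.
by rewrite big_split /= -mulr_suml (distr_sum (step_distr_is_distr D a2G)) mul1r.
Qed.

Lemma step_coef_ge0 c p q a1 a2 t :
  is_distr (Gam1 G c) p -> is_distr (Gam2 G c) q -> 0 <= p a1 * q a2 * delta G c a1 a2 t.
Proof.
move=> Dp Dq; have [a2G|a2G] := boolP (a2 \in Gam2 G c); last first.
  by rewrite (distr_out Dq a2G) mulr0 mul0r.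
by rewrite mulrAC mulr_ge0 ?(distr_ge0 _ Dq) ?step_weight_ge0.
Qed.

Lemma sum_step_exp c p q u :
  \sum_a1 \sum_a2 \sum_t p a1 * q a2 * delta G c a1 a2 t * u t =
  \sum_a2 q a2 * step_exp c p a2 u.
Proof.
rewrite exchange_big /=; apply: eq_bigr => a2 _.
rewrite /step_exp /step_distr mulr_sumr.
under [RHS]eq_bigr do rewrite mulr_suml mulr_sumr.
rewrite exchange_big /=; apply: eq_bigr => a1 _; apply: eq_bigr => t _.
by rewrite !mulrA [q a2 * _]mulrC.
Qed.

Lemma step_distr_scale_le c p q a2 t r :
  is_distr (Gam1 G c) p -> is_distr (Gam1 G c) q -> a2 \in Gam2 G c ->
  (forall a, r * p a <= q a) -> r * step_distr c p a2 t <= step_distr c q a2 t.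
Proof.
move=> Dp Dq a2G pq; rewrite mulr_sumr; apply: ler_sum => a1 _.
have [a1G|a1G] := boolP (a1 \in Gam1 G c); last first.
  by rewrite (distr_out Dp a1G) (distr_out Dq a1G) !mul0r mulr0.
by rewrite mulrA ler_wpM2r ?(distr_ge0 _ (delta_distr a1G a2G)).
Qed.

Lemma step_distr_eq0 c p q a2 t :
  is_distr (Gam1 G c) p -> is_distr (Gam1 G c) q -> a2 \in Gam2 G c ->
  (forall a, p a = 0 -> q a = 0) -> step_distr c p a2 t = 0 -> step_distr c q a2 t = 0.
Proof.
move=> Dp Dq a2G pq sum0; apply: big1 => a1 _.
have /eqP := psumr_eq0P (fun a _ => step_weight_ge0 a t Dp a2G) sum0 (i:=a1) isT.
by rewrite mulf_eq0 => /orP[/eqP/pq|/eqP] ->; rewrite ?mul0r ?mulr0.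
Qed.

End OneStep.

Section Safety.
Variables (R : realType) (S M : finType) (G : cgs R S M) (F : {set S}).
Implicit Types (xi : S -> M -> R) (u : S -> R).

Lemma safeP_itv (pi1 pi2 : seq S -> M -> R) n x xs :
  strategy1 G pi1 -> strategy2 G pi2 -> 0 <= safeP G F pi1 pi2 n x xs <= 1.
Proof.
move=> S1 S2; elim: n xs => [|n IH] xs /=; case: ifP => // _; rewrite ?lexx ?ler01 //.
have D1 := S1 x xs; have D2 := S2 x xs; apply/andP; split.
  apply: sumr_ge0 => a1 _; apply: sumr_ge0 => a2 _; apply: sumr_ge0 => t _.
  by rewrite mulr_ge0 ?step_coef_ge0 //; case/andP: (IH (rcons xs t)).
apply: le_trans (_ : _ <= \sum_a1 \sum_a2 \sum_t
    pi1 (x :: xs) a1 * pi2 (x :: xs) a2 * delta G (last x xs) a1 a2 t * 1) _.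
  apply: ler_sum => a1 _; apply: ler_sum => a2 _; apply: ler_sum => t _.
  by rewrite ler_wpM2l ?step_coef_ge0 //; case/andP: (IH (rcons xs t)).
rewrite sum_step_exp; apply: (distr_avg_le D2) => a2 a2G.
by apply: distr_avg_le (step_distr_is_distr D1 a2G) _ => t _.
Qed.

Lemma prob_safe_ge0 (pi1 pi2 : seq S -> M -> R) s :
  strategy1 G pi1 -> strategy2 G pi2 -> 0 <= prob_safe G F pi1 pi2 s.
Proof.
move=> S1 S2; apply: lb_le_inf; first by exists (safeP G F pi1 pi2 0 s [::]), 0%N.
by move=> y [n _ <-]; case/andP: (safeP_itv n s [::] S1 S2).
Qed.

Lemma prob_safe_le_safeP (pi1 pi2 : seq S -> M -> R) s n :
  strategy1 G pi1 -> strategy2 G pi2 ->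
  prob_safe G F pi1 pi2 s <= safeP G F pi1 pi2 n s [::].
Proof.
move=> S1 S2; apply: ge_inf; last by exists n.
by exists 0 => y [m _ <-]; case/andP: (safeP_itv m s [::] S1 S2).
Qed.

Lemma safeP_ge_certificate xi (pi2 : seq S -> M -> R) u :
  selector1 G xi -> strategy2 G pi2 ->
  (forall t, t \notin F -> u t <= 0) -> (forall t, u t <= 1) ->
  (forall s a2, s \in F -> a2 \in Gam2 G s -> u s <= step_exp G s (xi s) a2 u) ->
  forall n x xs, u (last x xs) <= safeP G F (memoryless xi) pi2 n x xs.
Proof.
move=> Sxi S2 u_out u1 u_step; elim=> [|n IH] x xs /=; case: ifP => cF;
  rewrite ?u1 ?u_out ?cF //.
have D1 := Sxi (last x xs); have D2 := S2 x xs.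
apply: le_trans (_ : _ <= \sum_a1 \sum_a2 \sum_t
    xi (last x xs) a1 * pi2 (x :: xs) a2 * delta G (last x xs) a1 a2 t * u t) _.
  by rewrite sum_step_exp; apply: (distr_avg_ge D2) => a2; apply: u_step.
apply: ler_sum => a1 _; apply: ler_sum => a2 _; apply: ler_sum => t _.
by rewrite ler_wpM2l ?step_coef_ge0 //; have := IH x (rcons xs t); rewrite last_rcons.
Qed.

Lemma prob_safe_ge_certificate xi (pi2 : seq S -> M -> R) u s :
  selector1 G xi -> strategy2 G pi2 ->
  (forall t, t \notin F -> u t <= 0) -> (forall t, u t <= 1) ->
  (forall s a2, s \in F -> a2 \in Gam2 G s -> u s <= step_exp G s (xi s) a2 u) ->
  u s <= prob_safe G F (memoryless xi) pi2 s.
Proof.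
move=> Sxi S2 u_out u1 u_step; apply: lb_le_inf.
  by exists (safeP G F (memoryless xi) pi2 0 s [::]), 0%N.
by move=> y [n _ <-]; apply: (safeP_ge_certificate Sxi S2 u_out u1 u_step n s [::]).
Qed.

End Safety.

Section ValueIteration.
Variables (R : realType) (S M : finType) (G : cgs R S M) (F : {set S}).
Implicit Types (u : S -> R).

Definition in01 u := forall t, 0 <= u t <= 1.

Definition guaranteed u s : set R :=
  [set r | exists2 p, is_distr (Gam1 G s) p &
     forall a2, a2 \in Gam2 G s -> r <= step_exp G s p a2 u].

Definition pre_safe u s : R := if s \in F then sup (guaranteed u s) else 0.

Fixpoint value_iter n : S -> R :=
  if n is n'.+1 then pre_safe (value_iter n') else fun t => (t \in F)%:R.

Lemma guaranteed0 u s : in01 u -> guaranteed u s 0.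
Proof.
move=> u01; have [p D] := exists_distr R (Gam1_nonempty G s).
exists p => // a2 a2G; apply: distr_avg_ge (step_distr_is_distr D a2G) _ => t _.
by case/andP: (u01 t).
Qed.

Lemma guaranteed_le1 u s r : in01 u -> guaranteed u s r -> r <= 1.
Proof.
move=> u01 [p D pr]; have [a2 a2G] := exists_move2 G s.
apply: le_trans (pr _ a2G) _; apply: distr_avg_le (step_distr_is_distr D a2G) _ => t _.
by case/andP: (u01 t).
Qed.

Lemma has_sup_guaranteed u s : in01 u -> has_sup (guaranteed u s).
Proof.
by move=> u01; split; [exists 0; apply: guaranteed0 | exists 1 => r /guaranteed_le1; apply].
Qed.

Lemma pre_safe_in01 u : in01 u -> in01 (pre_safe u).
Proof.
move=> u01 s; rewrite /pre_safe; case: ifP => _; rewrite ?lexx ?ler01 //.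
apply/andP; split.
  exact: (ub_le_sup (has_sup_guaranteed s u01).2 (guaranteed0 s u01)).
by apply: ge_sup; [exists 0; apply: guaranteed0 | move=> r /guaranteed_le1; apply].
Qed.

Lemma pre_safe_mono u u' s : in01 u -> in01 u' -> (forall t, u t <= u' t) ->
  pre_safe u s <= pre_safe u' s.
Proof.
move=> u01 u'01 uu'; rewrite /pre_safe; case: ifP => // _.
apply: ge_sup; first by exists 0; apply: guaranteed0.
move=> r [p D pr]; apply: (ub_le_sup (has_sup_guaranteed s u'01).2).
by exists p => // a2 a2G; apply: le_trans (pr _ a2G) (step_exp_mono D a2G uu').
Qed.

Lemma value_iter_in01 n : in01 (value_iter n).
Proof.
by elim: n => [t|n IH] /=; [rewrite ler0n lern1 leq_b1 | apply: pre_safe_in01].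
Qed.

Lemma value_iter_out n t : t \notin F -> value_iter n t = 0.
Proof. by case: n => [|n] /= /negbTE tF; rewrite /pre_safe tF. Qed.

Lemma value_iter_decr n t : value_iter n.+1 t <= value_iter n t.
Proof.
elim: n t => [|n IH] t; last exact: pre_safe_mono (value_iter_in01 _) (value_iter_in01 _) IH.
have [tF|tF] := boolP (t \in F); last by rewrite !value_iter_out.
by rewrite /= tF; case/andP: (value_iter_in01 1 t).
Qed.

Lemma value_iter_antitone m n t : (m <= n)%N -> value_iter n t <= value_iter m t.
Proof.
elim: n => [|n IH]; first by rewrite leqn0 => /eqP ->.
rewrite leq_eqVlt => /orP[/eqP -> //|]; rewrite ltnS => /IH.
exact: le_trans (value_iter_decr n t).
Qed.

End ValueIteration.

Section BestResponse.
Variables (R : realType) (S M : finType) (G : cgs R S M) (F : {set S}).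

Definition min_response c (q : M -> R) (u : S -> R) : M :=
  [arg min_(a < xchoose (exists_move2 G c) | a \in Gam2 G c) step_exp G c q a u]%O.

Lemma min_responseP c q u : min_response c q u \in Gam2 G c /\
  forall a, a \in Gam2 G c -> step_exp G c q (min_response c q u) u <= step_exp G c q a u.
Proof. by rewrite /min_response; case: arg_minP => [|a aG amin]; first exact: xchooseP. Qed.

(* The greedy reply of player 2 to [pi1] in the [N]-step game: at history
   [x :: xs], [N.-1 - size xs] steps remain after the current one. *)
Definition respond (pi1 : seq S -> M -> R) N (h : seq S) : M -> R :=
  if h is x :: xs then fun a =>
    (a == min_response (last x xs) (pi1 h) (value_iter G F (N.-1 - size xs)))%:R
  else fun _ => 0.

Lemma respond_strategy2 pi1 N : strategy2 G (respond pi1 N).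
Proof. by move=> x xs; apply: dirac_distr; apply: (min_responseP _ _ _).1. Qed.

Lemma safeP_respond_le pi1 N r x xs : strategy1 G pi1 -> (size xs + r)%N = N ->
  safeP G F pi1 (respond pi1 N) r x xs <= value_iter G F r (last x xs).
Proof.
move=> S1; elim: r xs => [|r IH] xs sz /=; case: ifP => cF; rewrite ?cF //; last first.
  by case/andP: (value_iter_in01 G F r.+1 (last x xs)).
set c := last x xs; set q := pi1 (x :: xs); set a := min_response c q (value_iter G F r).
have left_r : (N.-1 - size xs)%N = r by rewrite -sz addnS /= addKn.
apply: le_trans (_ : _ <= \sum_a1 \sum_a2 \sum_t
    q a1 * respond pi1 N (x :: xs) a2 * delta G c a1 a2 t * value_iter G F r t) _.
  apply: ler_sum => a1 _; apply: ler_sum => a2 _; apply: ler_sum => t _.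
  apply: ler_wpM2l; first exact: step_coef_ge0 (S1 x xs) (respond_strategy2 pi1 N x xs).
  by have := IH (rcons xs t); rewrite last_rcons size_rcons addSnnS => /(_ sz).
rewrite sum_step_exp /= left_r -/a (bigD1 a) //= eqxx mul1r big1 ?addr0; last first.
  by move=> b /negbTE ->; rewrite mul0r.
rewrite /pre_safe cF; apply: (ub_le_sup (has_sup_guaranteed G c (value_iter_in01 G F r)).2).
exists q; first exact: S1.
by move=> a2; case: (min_responseP c q (value_iter G F r)) => _; apply.
Qed.

Lemma val1_le_value_iter N s : val1_safe G F s <= value_iter G F N s.
Proof.
have [xi0 Sxi0] := fin_all_exists (fun s => exists_distr R (Gam1_nonempty G s)).
apply: ge_sup => [|v [pi1 S1 ->]].
  by eexists; exists (memoryless xi0) => // x xs; apply: Sxi0.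
have S2 := respond_strategy2 pi1 N.
apply: (@le_trans _ _ (safeP G F pi1 (respond pi1 N) N s [::])).
  2: by apply: safeP_respond_le.
apply: le_trans (prob_safe_le_safeP F s N S1 S2).
apply: ge_inf; last by exists (respond pi1 N).
by exists 0 => y [pi2 S2' ->]; apply: prob_safe_ge0.
Qed.

End BestResponse.

Section ValueLimit.
Variables (R : realType) (S M : finType) (G : cgs R S M) (F : {set S}).

Definition value_limit s : R := inf (range (fun n => value_iter G F n s)).

Lemma value_limit_le_iter n s : value_limit s <= value_iter G F n s.
Proof.
apply: ge_inf; last by exists n.
by exists 0 => y [m _ <-]; case/andP: (value_iter_in01 G F m s).
Qed.

Lemma value_limit_ge0 s : 0 <= value_limit s.
Proof.
apply: lb_le_inf; first by exists (value_iter G F 0 s), 0%N.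
by move=> y [m _ <-]; case/andP: (value_iter_in01 G F m s).
Qed.

Lemma value_limit_in01 : in01 value_limit.
Proof.
move=> t; rewrite value_limit_ge0 (le_trans (value_limit_le_iter 0 t)) //.
by case/andP: (value_iter_in01 G F 0 t).
Qed.

Lemma value_limit_out t : t \notin F -> value_limit t = 0.
Proof.
move=> tF; apply/eqP; rewrite eq_le value_limit_ge0 andbT.
by rewrite -(value_iter_out G 0 tF) value_limit_le_iter.
Qed.

Lemma val1_le_value_limit s : val1_safe G F s <= value_limit s.
Proof.
apply: lb_le_inf; first by exists (value_iter G F 0 s), 0%N.
by move=> y [n _ <-]; apply: val1_le_value_iter.
Qed.

Lemma value_iter_approx g : 0 < g ->
  exists N, forall t, value_iter G F N t <= value_limit t + g.
Proof.
move=> g0; have approx t : exists n, value_iter G F n t <= value_limit t + g.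
  have : value_limit t < value_limit t + g by rewrite ltrDl.
  case/inf_lt => [|_ [n _ <-] /ltW]; last by exists n.
  by exists (value_iter G F 0 t), 0%N.
have [Nt NtP] := fin_all_exists approx.
exists (\max_t Nt t)%N => t; apply: le_trans (NtP t).
by apply: value_iter_antitone; apply: leq_bigmax.
Qed.

Lemma value_limit_eps_step s g : 0 < g ->
  exists2 p, is_distr (Gam1 G s) p &
    forall a2, a2 \in Gam2 G s -> value_limit s - g <= step_exp G s p a2 value_limit.
Proof.
move=> g0; have [sF|sF] := boolP (s \in F); last first.
  have [p D] := exists_distr R (Gam1_nonempty G s).
  exists p => // a2 a2G; rewrite value_limit_out // sub0r.
  apply: distr_avg_ge (step_distr_is_distr D a2G) _ => t _.
  by rewrite (le_trans _ (value_limit_ge0 t)) // lerNl oppr0 ltW.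
have g20 : 0 < g / 2 by rewrite divr_gt0.
have [N NP] := value_iter_approx g20.
have [r [p D pr] rP] := sup_adherent g20 (has_sup_guaranteed G s (value_iter_in01 G F N)).
have : value_limit s <= sup (guaranteed G (value_iter G F N) s).
  by have := value_limit_le_iter N.+1 s; rewrite /= /pre_safe sF.
exists p => // a2 a2G.
have : step_exp G s p a2 (value_iter G F N) <= step_exp G s p a2 value_limit + g / 2.
  by rewrite -step_exp_addr //; apply: step_exp_mono.
have := pr a2 a2G; have := splitr g; lra.
Qed.

Lemma value_limit_opt_step s :
  exists2 p, is_distr (Gam1 G s) p &
    forall a2, a2 \in Gam2 G s -> value_limit s <= step_exp G s p a2 value_limit.
Proof.
pose w (j : {a2 | a2 \in Gam2 G s}) a1 := \sum_t delta G s a1 (val j) t * value_limit t.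
have [|p D pP] := @distr_approx_feasible R M (Gam1 G s) _ w (fun=> value_limit s).
  move=> g /(value_limit_eps_step s) [p D pP]; exists p => // j.
  by rewrite -step_exp_sum; apply: pP; apply: valP.
by exists p => // a2 a2G; rewrite step_exp_sum; apply: (pP (exist _ a2 a2G)).
Qed.

End ValueLimit.

Section RoundedOptimalSelector.
Variables (R : realType) (S M : finType) (G : cgs R S M) (F : {set S}).
Variables (ps : S -> M -> R) (e pmin mumin gap : R) (k : nat).

Local Notation v := (value_limit G F).

Hypothesis ps_distr : forall s, is_distr (Gam1 G s) (ps s).
Hypothesis ps_opt : forall s a2, a2 \in Gam2 G s -> v s <= step_exp G s (ps s) a2 v.
Hypotheses (e_gt0 : 0 < e) (e_le1 : e <= 1).
Hypothesis pmin_le : forall s a, 0 < ps s a -> pmin <= ps s a.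
Hypothesis mumin_le : forall s a2 t, a2 \in Gam2 G s ->
  0 < step_distr G s (ps s) a2 t -> mumin <= step_distr G s (ps s) a2 t.
Hypothesis mumin_ge0 : 0 <= mumin.
Hypothesis gap_ge0 : 0 <= gap.
Hypothesis gap_le : forall t t', v t != v t' -> gap <= `|v t - v t'|.
Hypothesis k_large_pmin : 2 <= k%:R * pmin.
Hypothesis k_large_gap : 12 * #|M|%:R <= k%:R * (e * mumin * gap ^+ 2).

Definition rounded s : M -> R := round_distr (ps s) k.

Definition certificate t : R := v t - e + e * v t ^+ 2.

Lemma rounded_selector : selector1 G rounded.
Proof. by move=> s; apply: round_distr_is_distr (pmin_le (s:=s)) _. Qed.

Lemma rounded_k_uniform : k_uniform G F k rounded.
Proof. by move=> s _ _ a _; apply: round_distr_frac. Qed.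

Lemma rounded_step_loss s a2 : a2 \in Gam2 G s ->
  step_exp G s (ps s) a2 v - step_exp G s (rounded s) a2 v <= e * mumin * gap ^+ 2 / 12.
Proof.
move=> a2G; rewrite !step_exp_sum -sumrB.
under eq_bigr do rewrite -mulrBl.
have k_gt0 : 0 < k%:R :> R.
  by rewrite ltr0n lt0n; apply/eqP => k0; move: k_large_pmin; rewrite k0 mul0r; lra.
apply: le_trans (sum_weighted_diff_le (c := k%:R^-1) _ _ _) _.
- by rewrite invr_ge0 ltW.
- move=> a; have := round_distr_ge (ps_distr s) (pmin_le (s:=s)) k_large_pmin a.
  by rewrite /rounded; lra.
- move=> a; have [a1G|a1G] := boolP (a \in Gam1 G s); last first.
    by rewrite /rounded round_distr_eq0 (distr_out (ps_distr s) a1G) ?eqxx.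
  have Dd := delta_distr a1G a2G; move=> _; apply/andP; split.
    by apply: distr_avg_ge Dd _ => t _; apply: value_limit_ge0.
  by apply: distr_avg_le Dd _ => t _; case/andP: (value_limit_in01 G F t).
rewrite ler_pdivrMr //; have := k_large_gap; lra.
Qed.

Lemma rounded_ge_half s a : 2^-1 * ps s a <= rounded s a.
Proof.
have := round_distr_ge_half (ps_distr s) (pmin_le (s:=s)) k_large_pmin a.
by rewrite /rounded mulrC.
Qed.

(* Either the successor values are spread, and the variance under the
   rounded move (which keeps at least half of every weight) pays for the
   rounding loss, or they are constant on the support, which rounding keeps. *)
Lemma rounded_step_variance s a2 : a2 \in Gam2 G s ->
  let mu := step_distr G s (rounded s) a2 in
  exists V, [/\ 0 <= V, (\sum_t mu t * v t) ^+ 2 + V <= \sum_t mu t * v t ^+ 2 &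
    3 * (step_exp G s (ps s) a2 v - step_exp G s (rounded s) a2 v) <= e * V].
Proof.
move=> a2G mu; set mu0 := step_distr G s (ps s) a2.
have D0 := step_distr_is_distr (ps_distr s) a2G.
have D := step_distr_is_distr (rounded_selector s) a2G.
have [[t1 [t2 [pos1 pos2 v12]]]|flat] :=
  pselect (exists t1 t2, [/\ 0 < mu0 t1, 0 < mu0 t2 & v t1 != v t2]).
  have half t : 0 < mu0 t -> mumin / 2 <= mu t.
    move=> pos; have := mumin_le a2G pos.
    have := step_distr_scale_le t (ps_distr s) (rounded_selector s) a2G (@rounded_ge_half s).
    by rewrite -/mu0 -/mu; lra.
  exists (mumin / 2 * gap ^+ 2 / 2); split.
  - by rewrite !mulr_ge0 ?sqr_ge0 ?invr_ge0 ?ler0n.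
  - apply: variance_ge_spread (half _ pos1) (half _ pos2) _ gap_ge0 (gap_le v12).
    + by move=> t; apply: distr_ge0 D.
    + exact: distr_sum D.
    + by apply: contraNneq v12 => ->.
    + by rewrite divr_ge0.
  - by have := rounded_step_loss a2G; lra.
have [t0 pos0] := distr_pos D0.
have v_supp0 t : mu0 t != 0 -> v t = v t0.
  move=> nz; apply/eqP; apply: contraNT nz => vt; apply/eqP.
  have := distr_ge0 t D0; rewrite -/mu0 le_eqVlt => /orP[/eqP <- //|pos].
  by case: flat; exists t, t0.
have v_supp t : mu t != 0 -> v t = v t0.
  move=> nz; apply: v_supp0; apply: contra nz => /eqP mu00; apply/eqP.
  exact: step_distr_eq0 (ps_distr s) (rounded_selector s) a2G
    (@round_distr_eq0 _ _ (ps s) k) mu00.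
have m_eq : \sum_t mu t * v t = v t0 := sum_const_on_support (distr_sum D) v_supp.
exists 0; split => //.
  rewrite addr0 m_eq (sum_const_on_support (c := v t0 ^+ 2) (distr_sum D)) //.
  by move=> t /v_supp ->.
rewrite mulr0 /step_exp -/mu0 -/mu m_eq (sum_const_on_support (distr_sum D0) v_supp0).
by rewrite subrr mulr0.
Qed.

Lemma certificate_step s a2 : a2 \in Gam2 G s ->
  certificate s <= step_exp G s (rounded s) a2 certificate.
Proof.
move=> a2G; set mu := step_distr G s (rounded s) a2.
have D := step_distr_is_distr (rounded_selector s) a2G.
have [V [V0 var loss]] := rounded_step_variance a2G.
have -> : step_exp G s (rounded s) a2 certificate =
    \sum_t mu t * v t - e + e * \sum_t mu t * v t ^+ 2.
  have expand t : mu t * certificate t = mu t * v t - e * mu t + e * (mu t * v t ^+ 2).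
    by rewrite /certificate; ring.
  rewrite /step_exp -/mu; under eq_bigr do rewrite expand.
  by rewrite !big_split /= sumrN -!mulr_sumr (distr_sum D) mulr1.
apply: (convex_gain e_gt0 e_le1 (value_limit_ge0 G F s) _ (ps_opt a2G) _ V0 var loss).
- apply/andP; split; first by apply: distr_avg_ge D _ => t _; apply: value_limit_ge0.
  by apply: distr_avg_le D _ => t _; case/andP: (value_limit_in01 G F t).
- apply: distr_avg_le (step_distr_is_distr (ps_distr s) a2G) _ => t _.
  by case/andP: (value_limit_in01 G F t).
Qed.

Lemma rounded_eps_optimal s (pi2 : seq S -> M -> R) : strategy2 G pi2 ->
  val1_safe G F s - e <= prob_safe G F (memoryless rounded) pi2 s.
Proof.
move=> S2.
apply: le_trans (prob_safe_ge_certificate (u:=certificate) s rounded_selector S2 _ _ _).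
- have := val1_le_value_limit G F s; have := mulr_ge0 (ltW e_gt0) (sqr_ge0 (v s)).
  by rewrite /certificate; lra.
- move=> t tF; rewrite /certificate value_limit_out // expr0n mulr0 addr0 sub0r.
  by rewrite lerNl oppr0 ltW.
- move=> t; have /andP[v0 v1] := value_limit_in01 G F t.
  have v21 : v t ^+ 2 <= 1 by rewrite expr_le1.
  have := ler_piMr (ltW e_gt0) v21.
  by rewrite /certificate; lra.
- by move=> t a2 _; apply: certificate_step.
Qed.

End RoundedOptimalSelector.

Lemma exists_nat_mul_ge (R : archiRealFieldType) (a b c d : R) :
  0 < a -> 0 < b -> 0 <= c -> 0 <= d ->
  exists k : nat, [/\ (0 < k)%N, c <= k%:R * a & d <= k%:R * b].
Proof.
move=> a0 b0 c0 d0; have k_gt := truncnS_gt (c / a + d / b).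
have ca0 : 0 <= c / a by rewrite divr_ge0 // ltW.
have db0 : 0 <= d / b by rewrite divr_ge0 // ltW.
by exists (Num.truncn (c / a + d / b)).+1; split=> //; rewrite -ler_pdivrMr //; lra.
Qed.

Theorem lemma15 (R : realType) (S M : finType) (G : cgs R S M)
    (F : {set S}) (eps : R) :
  0 < eps ->
  exists (k : nat) (xi : S -> M -> R),
    (0 < k)%N /\ selector1 G xi /\ k_uniform G F k xi /\
    forall (s : S) (pi2 : seq S -> M -> R), strategy2 G pi2 ->
      prob_safe G F (memoryless xi) pi2 s >= val1_safe G F s - eps.
Proof.
move=> eps0; pose e := Order.min eps 1.
have e0 : 0 < e by rewrite lt_min eps0 ltr01.
have e1 : e <= 1 by rewrite ge_min lexx orbT.
pose v := value_limit G F.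
have [ps ps_distr ps_opt] := fin_all_exists2 (value_limit_opt_step G F).
have [pmin pmin0 pmin_le] := @finite_pos_lower_bound R _
  (fun x : S * M => 0 < ps x.1 x.2) (fun x => ps x.1 x.2) (fun _ => id).
have [mumin mumin0 mumin_le] := @finite_pos_lower_bound R _
  (fun x : S * M * S => (x.1.2 \in Gam2 G x.1.1) && (0 < step_distr G x.1.1 (ps x.1.1) x.1.2 x.2))
  (fun x => step_distr G x.1.1 (ps x.1.1) x.1.2 x.2) (fun x h => (andP h).2).
have [gap gap0 gap_le] := @finite_pos_lower_bound R _
  (fun x : S * S => v x.1 != v x.2) (fun x => `|v x.1 - v x.2|)
  (fun x => ltac:(by rewrite normr_gt0 subr_eq0)).
have [k [k0 k_pmin k_gap]] : exists k : nat, [/\ (0 < k)%N, 2 <= k%:R * pmin &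
    12 * #|M|%:R <= k%:R * (e * mumin * gap ^+ 2)].
  by apply: exists_nat_mul_ge; rewrite ?mulr_ge0 ?mulr_gt0 ?exprn_gt0 ?ler0n.
exists k, (rounded ps k); split=> //; split.
  exact: rounded_selector ps_distr (fun s a => pmin_le (s, a)) k_pmin.
split=> [|s pi2 S2]; first exact: rounded_k_uniform.
have := rounded_eps_optimal ps_distr ps_opt e0 e1 (fun s a => pmin_le (s, a))
  (fun s a2 t a2G pos => mumin_le (s, a2, t) (andb_true_intro (conj a2G pos)))
  (ltW mumin0) (ltW gap0) (fun t t' => gap_le (t, t')) k_pmin k_gap s S2.
by apply: le_trans; rewrite lerD2l lerN2 ge_min lexx.
Qed.
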